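(* Let $T_1,\dots,T_k$ be subtrees of a tree $T$ such that $T=T_1\cup\dots\cup T_k$. Then $\operatorname{pw}(T)+1\le \sum_{i=1}^k(\operatorname{pw}(T_i)+1)$.
   Context: $\operatorname{pw}$ denotes pathwidth: the minimum, over all path decompositions (sequences of vertex subsets such that each edge lies in some set and each vertex lies in a non-empty consecutive run of sets), of the maximum set size minus 1. A subtree is a connected subgraph of $T$. *)

From HB Require Import structures.
From mathcomp Require Import all_boot.
From mathcomp Require Import boolp.
Set Implicit Arguments. Unset Strict Implicit. Unset Printing Implicit Defensive.

Section Graphs.
Variable T : finType.

Definition simple_graph (e : rel T) : Prop :=
  symmetric e /\ irreflexive e.

(* no cycle: no uniq closed e-walk with at least 3 vertices *)
Definition acyclic (e : rel T) : Prop :=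
  forall (x : T) (p : seq T), path e x p -> uniq (x :: p) -> 2 <= size p ->
    ~~ e (last x p) x.

Definition is_tree (e : rel T) : Prop :=
  [/\ simple_graph e, 0 < #|T|, (forall x y : T, connect e x y) & acyclic e].

Definition subgraph (e : rel T) (V : {set T}) (E : rel T) : Prop :=
  symmetric E /\ (forall x y, E x y -> [&& e x y, x \in V & y \in V]).

Definition subtree (e : rel T) (V : {set T}) (E : rel T) : Prop :=
  [/\ subgraph e V E, V != set0 & {in V &, forall x y, connect E x y}].

Definition path_decomposition (V : {set T}) (E : rel T) (s : seq {set T}) : Prop :=
  [/\ all (fun B : {set T} => B \subset V) s,
      (forall x y, E x y -> has (fun B : {set T} => (x \in B) && (y \in B)) s),
      (forall x, x \in V -> has (fun B : {set T} => x \in B) s) &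
      (forall x i j l, i <= j -> j <= l -> l < size s ->
         x \in nth set0 s i -> x \in nth set0 s l -> x \in nth set0 s j)].

Definition pd_width (s : seq {set T}) : nat := (\max_(B <- s) #|B|).-1.

Definition has_pd_of_width (V : {set T}) (E : rel T) : pred nat :=
  fun w => `[< exists s, path_decomposition V E s /\ pd_width s <= w >].

Definition pathwidth (V : {set T}) (E : rel T) : nat :=
  match pselect (exists w, has_pd_of_width V E w) with
  | left h => ex_minn h
  | right _ => 0
  end.

End Graphs.

(* Order the subtrees so that each one meets the union of the previous ones; the
   union then stays connected, and it suffices to merge a path decomposition s of a
   connected subgraph (U, F) of a forest with a path decomposition t of a further
   subgraph (W, G).  Each component of G outside U is joined to U at exactly one
   vertex, since two such vertices and a path between them in U would close a cycle.
   Replace the j-th bag B_j of s by the bags B_j ∪ {d ∈ C_q : d ∉ U and the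
   attachment vertex of d first occurs in B_j}, for C_q running through t.  These
   bags have size at most |B_j| + |C_q|, so the widths plus one add up. *)

From mathcomp Require Import all_boot zify boolp.
Set Implicit Arguments. Unset Strict Implicit. Unset Printing Implicit Defensive.

Lemma mem_nth_set_lt (T : finType) (s : seq {set T}) j x :
  x \in nth set0 s j -> j < size s.
Proof. by case: (ltnP j (size s)) => // ?; rewrite nth_default ?inE. Qed.

Lemma leq_card_nth_bigmax (T : finType) (s : seq {set T}) j :
  #|nth set0 s j| <= \max_(B <- s) #|B|.
Proof.
case: (ltnP j (size s)) => ?; first by rewrite leq_bigmax_seq ?mem_nth.
by rewrite nth_default ?cards0.
Qed.

Lemma leq_mod_eq_div a b n : a <= b -> a %/ n = b %/ n -> a %% n <= b %% n.
Proof. by move=> ab abn; move: (divn_eq a n) (divn_eq b n); rewrite abn; lia. Qed.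

Section PathDecompositions.
Variables (T : finType) (V : {set T}) (E : rel T).

Lemma path_decomposition_mem_nth s j x :
  path_decomposition V E s -> x \in nth set0 s j -> x \in V.
Proof.
case=> /allP sV _ _ _ xj; have /mem_nth_set_lt js := xj.
exact: subsetP (sV _ (mem_nth set0 js)) x xj.
Qed.

Lemma path_decomposition_edge s x y :
  path_decomposition V E s -> E x y -> (x \in V) && (y \in V).
Proof.
move=> s_dec; case: (s_dec) => _ sE _ _ /sE /(has_nthP set0)[j _ /andP[xj yj]].
by rewrite (path_decomposition_mem_nth s_dec xj) (path_decomposition_mem_nth s_dec yj).
Qed.

Lemma sub_path_decomposition (E' : rel T) s :
  subrel E' E -> path_decomposition V E s -> path_decomposition V E' s.
Proof. by move=> E'E [sV sE sx sC]; split=> // x y /E'E /sE. Qed.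

Lemma pathwidth_le_width s : path_decomposition V E s -> pathwidth V E <= pd_width s.
Proof.
move=> s_dec; rewrite /pathwidth; case: pselect => [ex|[]]; last first.
  by exists (pd_width s); apply/asboolP; exists s.
by case: ex_minnP => w _; apply; apply/asboolP; exists s.
Qed.

Lemma pathwidth_attained s :
  path_decomposition V E s -> has_pd_of_width V E (pathwidth V E).
Proof.
move=> s_dec; rewrite /pathwidth; case: pselect => [ex|[]]; first by case: ex_minnP.
by exists (pd_width s); apply/asboolP; exists s.
Qed.

Lemma pathwidth_lt_max s x :
  x \in V -> path_decomposition V E s -> pathwidth V E < \max_(B <- s) #|B|.
Proof.
move=> xV s_dec; have pw_le := pathwidth_le_width s_dec.
case: (s_dec) => _ _ /(_ x xV) /(has_nthP set0)[j _ xj] _.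
have max_gt0 : 0 < \max_(B <- s) #|B|.
  by apply: leq_trans (leq_card_nth_bigmax s j); apply/card_gt0P; exists x.
by move: pw_le; rewrite /pd_width; lia.
Qed.

Lemma optimal_path_decomposition :
  (forall x y, E x y -> (x \in V) && (y \in V)) ->
  exists2 s, path_decomposition V E s & \max_(B <- s) #|B| <= (pathwidth V E).+1.
Proof.
move=> EV; have single_dec : path_decomposition V E [:: V].
  split=> [|x y /EV /= ->|x /= ->|x i j l ij jl l1] //=; first by rewrite subxx.
  rewrite ltnS leqn0 in l1; have -> : j = 0 by lia.
  by have -> : i = 0 by lia.
have /asboolP[s [s_dec s_width]] := pathwidth_attained single_dec.
by exists s => //; move: s_width; rewrite /pd_width; lia.
Qed.

End PathDecompositions.

Lemma acyclic_connect_edge (T : finType) (e R : rel T) :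
  simple_graph e -> acyclic e -> subrel R e ->
  forall x y, connect R x y -> e x y -> R x y.
Proof.
move=> [e_sym e_irr] e_acyc Re x y /connectP[p pR ->].
case/shortenP: pR => -[|z [|z' p']] pR p_uniq _ exy.
- by rewrite /= e_irr in exy.
- by case/andP: pR.
- have := e_acyc x [:: z, z' & p'] (sub_path Re pR) p_uniq isT.
  by rewrite e_sym exy.
Qed.

Lemma connect_exit_edge (T : finType) (e : rel T) (U : {set T}) x y :
  connect e x y -> x \in U -> y \notin U ->
  exists u w, [/\ e u w, u \in U & w \notin U].
Proof.
move=> /connectP[p + ->]; elim: p x => [|z p IHp] x /=; first by move=> _ ->.
case/andP=> exz pz xU; case: (boolP (z \in U)) => [zU|zU _]; first exact: IHp.
by exists x, z.
Qed.

Lemma connect_setU (T : finType) (U W : {set T}) (F G : rel T) :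
  {in U &, forall x y, connect F x y} -> {in W &, forall x y, connect G x y} ->
  (U != set0 -> U :&: W != set0) ->
  {in U :|: W &, forall x y, connect [rel a b | F a b || G a b] x y}.
Proof.
move=> F_conn G_conn meet; set FG := [rel a b | F a b || G a b].
have conn_U : {in U &, forall x y, connect FG x y}.
  move=> x y xU yU; apply: connect_sub (F_conn x y xU yU) => a b ab.
  by rewrite connect1 //= ab.
have conn_W : {in W &, forall x y, connect FG x y}.
  move=> x y xW yW; apply: connect_sub (G_conn x y xW yW) => a b ab.
  by rewrite connect1 //= ab orbT.
have [->|/meet/set0Pn[z /setIP[zU zW]]] := eqVneq U set0; first by rewrite set0U.
move=> x y /setUP[xU|xW] /setUP[yU|yW]; first exact: conn_U.
- exact: connect_trans (conn_U x z xU zU) (conn_W z y zW yW).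
- exact: connect_trans (conn_W x z xW zW) (conn_U z y zU yU).
- exact: conn_W.
Qed.

Section Merge.
Variables (T : finType) (e : rel T).
Hypotheses (e_simple : simple_graph e) (e_acyclic : acyclic e).
Variables (U W : {set T}) (F G : rel T) (s t : seq {set T}).
Hypotheses (Fe : subrel F e) (Ge : subrel G e) (G_sym : symmetric G).
Hypothesis F_connected : {in U &, forall x y, connect F x y}.
Hypotheses (s_dec : path_decomposition U F s) (t_dec : path_decomposition W G t).

Definition outer_edge : rel T := [rel x y | [&& G x y, x \notin U & y \notin U]].

Definition attaches (y c : T) : bool :=
  (c \in U) && [exists d, [&& connect outer_edge y d, G c d & d \notin U]].

Lemma outer_connect_sym : connect_sym outer_edge.
Proof.
by apply: sym_connect_sym => x y; rewrite /outer_edge /= G_sym [(x \notin U) && _]andbC.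
Qed.

Lemma attaches_unique y c1 c2 : attaches y c1 -> attaches y c2 -> c1 = c2.
Proof.
case/andP=> c1U /existsP[d1 /and3P[yd1 Gc1d1 d1U]].
case/andP=> c2U /existsP[d2 /and3P[yd2 Gc2d2 d2U]].
have [//|c1c2] := eqVneq c1 c2.
have neq_c1 z : z \notin U -> z != c1 by apply: contraNneq => ->.
(* An [R]-path from [c1] to [d1] would close a cycle with the edge [c1 d1]. *)
pose R := [rel x z | F x z || [&& G x z, x != c1 & z != c1]].
have Re : subrel R e by move=> x z /orP[/Fe|/and3P[/Ge]].
have outerR : subrel outer_edge R.
  by move=> x z /and3P[Gxz xU zU]; rewrite /= Gxz !neq_c1 ?orbT.
have c1_d1 : connect R c1 d1.
  apply: connect_trans (connect_sub _ (F_connected c1U c2U)) _.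
    by move=> x z Fxz; rewrite connect1 //= Fxz.
  apply: (@connect_trans _ _ d2).
    by rewrite connect1 //= Gc2d2 eq_sym c1c2 neq_c1 ?orbT.
  apply: connect_sub (_ : connect outer_edge d2 d1) => [x z /outerR|]; first exact: connect1.
  by apply: connect_trans yd1; rewrite outer_connect_sym.
have /orP[Fc1d1|] := acyclic_connect_edge e_simple e_acyclic Re c1_d1 (Ge Gc1d1).
  by have /andP[_] := path_decomposition_edge s_dec Fc1d1; rewrite (negPf d1U).
by rewrite eqxx andbF.
Qed.

Definition attach_index y : nat :=
  if [pick c | attaches y c] is Some c then find (fun B : {set T} => c \in B) s else 0.

Lemma attach_indexE y c : attaches y c -> attach_index y = find (fun B : {set T} => c \in B) s.
Proof.
rewrite /attach_index; case: pickP => [c' yc' yc|/(_ c)->//].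
by rewrite (attaches_unique yc' yc).
Qed.

Lemma attach_index_le y : attach_index y <= size s.
Proof. by rewrite /attach_index; case: pickP => [c _|_]; rewrite ?find_size. Qed.

Lemma attach_index_outer x y : outer_edge x y -> attach_index x = attach_index y.
Proof.
move=> xy; rewrite /attach_index (@eq_pick _ (attaches x) (attaches y)) // => c.
congr (_ && _); apply: eq_existsb => d.
by rewrite (same_connect outer_connect_sym (connect1 xy)).
Qed.

Definition block_size := (size t).+1.

(* Bags are indexed lexicographically by pairs [(j, q)], encoded as [j * block_size + q]. *)
Definition merged_bag j q : {set T} :=
  nth set0 s j :|: [set d in nth set0 t q | (d \notin U) && (attach_index d == j)].

Definition merged : seq {set T} :=
  mkseq (fun m => merged_bag (m %/ block_size) (m %% block_size))
        ((size s).+1 * block_size).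

Lemma mem_merged_bag x j q : (x \in merged_bag j q) =
  (x \in nth set0 s j) || [&& x \in nth set0 t q, x \notin U & attach_index x == j].
Proof. by rewrite !inE. Qed.

Lemma has_merged (a : pred {set T}) j q :
  j <= size s -> q <= size t -> a (merged_bag j q) -> has a merged.
Proof.
move=> js qt a_jq; have q_lt : q < block_size by [].
have jq_lt : j * block_size + q < (size s).+1 * block_size.
  apply: (@leq_trans (j.+1 * block_size)); first by rewrite mulSnr ltn_add2l.
  by rewrite leq_mul2r ltnS js orbT.
apply/(has_nthP set0); exists (j * block_size + q); first by rewrite size_mkseq.
by rewrite nth_mkseq // divnMDl ?modnMDl ?divn_small ?modn_small ?addn0.
Qed.

Lemma merged_has_s (a : pred {set T}) :
  (forall B B' : {set T}, B \subset B' -> a B -> a B') -> has a s -> has a merged.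
Proof.
move=> a_mono /(has_nthP set0)[j js a_j].
exact: has_merged (ltnW js) (leq0n _) (a_mono _ _ (subsetUl _ _) a_j).
Qed.

Lemma merged_has_pair x y : has (fun B : {set T} => (x \in B) && (y \in B)) s ->
  has (fun B : {set T} => (x \in B) && (y \in B)) merged.
Proof. by apply: merged_has_s => B B' /subsetP BB' /andP[/BB'-> /BB'->]. Qed.

Lemma merged_cross_edge x y : G x y -> x \in U -> y \notin U ->
  has (fun B : {set T} => (x \in B) && (y \in B)) merged.
Proof.
move=> Gxy xU yU.
have y_x : attaches y x by rewrite /attaches xU; apply/existsP; exists y; rewrite connect0 Gxy.
have [_ _ /(_ x xU) x_in_s _] := s_dec.
have /andP[_ yW] := path_decomposition_edge t_dec Gxy.
have [_ _ /(_ y yW) /(has_nthP set0)[q qt yq] _] := t_dec.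
apply: (has_merged (attach_index_le y) (ltnW qt)) => /=.
by rewrite !mem_merged_bag (attach_indexE y_x) (nth_find set0 x_in_s) yq yU eqxx orbT.
Qed.

Lemma merged_outer_edge x y : outer_edge x y ->
  has (fun B : {set T} => (x \in B) && (y \in B)) merged.
Proof.
move=> xy; have /and3P[Gxy xU yU] := xy.
have [_ /(_ x y Gxy) /(has_nthP set0)[q qt /andP[xq yq]] _ _] := t_dec.
apply: (has_merged (attach_index_le x) (ltnW qt)) => /=.
by rewrite !mem_merged_bag xq yq xU yU (attach_index_outer xy) eqxx !orbT.
Qed.

Lemma merged_covers_edge x y : F x y || G x y ->
  has (fun B : {set T} => (x \in B) && (y \in B)) merged.
Proof.
have [_ s_edge _ _] := s_dec.
case/orP=> [/s_edge/merged_has_pair //|Gxy].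
case: (boolP (x \in U)) => xU; case: (boolP (y \in U)) => yU.
- apply/merged_has_pair/s_edge.
  exact: (acyclic_connect_edge e_simple e_acyclic Fe (F_connected xU yU) (Ge Gxy)).
- exact: merged_cross_edge.
- rewrite G_sym in Gxy; apply: sub_has (merged_cross_edge Gxy yU xU) => B.
  by rewrite andbC.
- by apply: merged_outer_edge; apply/and3P.
Qed.

Lemma merged_covers_vertex x : x \in U :|: W -> has (fun B : {set T} => x \in B) merged.
Proof.
move=> xUW; case: (boolP (x \in U)) => xU.
  have [_ _ /(_ x xU) x_in_s _] := s_dec.
  by apply: (merged_has_s _ x_in_s) => B B' /subsetP; apply.
have xW : x \in W by move: xUW; rewrite inE (negPf xU).
have [_ _ /(_ x xW) /(has_nthP set0)[q qt xq] _] := t_dec.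
apply: (has_merged (attach_index_le x) (ltnW qt)) => /=.
by rewrite mem_merged_bag xq xU eqxx orbT.
Qed.

Lemma merged_interpolates x m1 m2 m3 : m1 <= m2 -> m2 <= m3 -> m3 < size merged ->
  x \in nth set0 merged m1 -> x \in nth set0 merged m3 -> x \in nth set0 merged m2.
Proof.
have [_ _ _ s_int] := s_dec; have [_ _ _ t_int] := t_dec.
move=> m12 m23 m3_lt; rewrite size_mkseq in m3_lt; rewrite !nth_mkseq; [|lia..].
set n := block_size; rewrite !mem_merged_bag; case: (boolP (x \in U)) => xU /=.
  rewrite !andbF !orbF => x1 x3.
  apply: (s_int x (m1 %/ n) _ (m3 %/ n)); rewrite ?leq_div2r //.
  exact: mem_nth_set_lt x3.
have notin_s j : x \in nth set0 s j = false.
  by apply: contraNF xU => /(path_decomposition_mem_nth s_dec).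
rewrite !notin_s /= => /andP[x1 /eqP h1] /andP[x3 /eqP h3].
have h2 : m2 %/ n = attach_index x.
  by apply/eqP; rewrite eqn_leq {1}h3 h1 !leq_div2r.
rewrite h2 eqxx andbT; apply: (t_int x (m1 %% n) _ (m3 %% n)) => //.
- by rewrite leq_mod_eq_div // h2 h1.
- by rewrite leq_mod_eq_div // h2 h3.
- exact: mem_nth_set_lt x3.
Qed.

Lemma merged_decomposition :
  path_decomposition (U :|: W) [rel x y | F x y || G x y] merged.
Proof.
split; [|exact: merged_covers_edge|exact: merged_covers_vertex|exact: merged_interpolates].
apply/allP => B /mapP[m _ ->]; apply/subsetP => x; rewrite mem_merged_bag inE.
case/orP=> [/(path_decomposition_mem_nth s_dec)->//|/and3P[xq _ _]].
by rewrite (path_decomposition_mem_nth t_dec xq) orbT.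
Qed.

Lemma merged_width :
  \max_(B <- merged) #|B| <= \max_(B <- s) #|B| + \max_(B <- t) #|B|.
Proof.
apply/bigmax_leqP_seq => B /mapP[m _ ->] _.
apply: leq_trans (leq_of_leqif (leq_card_setU _ _)) _.
apply: leq_add (leq_card_nth_bigmax _ _) (leq_trans _ (leq_card_nth_bigmax t (m %% block_size))).
by apply/subset_leq_card/subsetP => d; rewrite inE => /andP[].
Qed.

End Merge.

Section SubtreeUnion.
Variables (T : finType) (e : rel T) (k : nat).
Variables (V : 'I_k -> {set T}) (E : 'I_k -> rel T).
Hypotheses (e_tree : is_tree e) (E_subtree : forall i, subtree e (V i) (E i)).
Hypothesis e_covered : forall x y, e x y -> exists i, E i x y.

Definition union_vertices (S : {set 'I_k}) : {set T} := \bigcup_(i in S) V i.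

Definition union_edges (S : {set 'I_k}) : rel T := fun x y => [exists i in S, E i x y].

Definition union_decomposable (S : {set 'I_k}) : Prop :=
  {in union_vertices S &, forall x y, connect (union_edges S) x y} /\
  exists2 s, path_decomposition (union_vertices S) (union_edges S) s &
    \max_(B <- s) #|B| <= \sum_(i in S) (pathwidth (V i) (E i)).+1.

Lemma subtree_edge i x y : E i x y -> [&& e x y, x \in V i & y \in V i].
Proof. by have [[_ EV] _ _] := E_subtree i; apply: EV. Qed.

Lemma union_edgesU1 S i x y :
  union_edges (i |: S) x y = union_edges S x y || E i x y.
Proof.
apply/existsP/orP => [[j /andP[]]|[/existsP[j /andP[jS Ej]]|Ei]].
- rewrite !inE => /orP[/eqP-> ->|jS Ej]; first by right.
  by left; apply/existsP; exists j; rewrite jS.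
- by exists j; rewrite inE jS orbT.
- by exists i; rewrite setU11.
Qed.

Lemma union_edges_sub S : subrel (union_edges S) e.
Proof. by move=> x y /existsP[i /andP[_ /subtree_edge/andP[]]]. Qed.

Lemma union_decomposable0 : union_decomposable set0.
Proof.
rewrite /union_decomposable /union_vertices big_set0; split=> [x y|]; first by rewrite inE.
exists [::]; last by rewrite big_nil.
by split=> // [x y /existsP[i]|x]; rewrite inE.
Qed.

Lemma union_decomposableU1 (S : {set 'I_k}) i : i \notin S ->
  (union_vertices S != set0 -> union_vertices S :&: V i != set0) ->
  union_decomposable S -> union_decomposable (i |: S).
Proof.
move=> iS meet [S_conn [s s_dec s_width]].
have [[E_sym _] _ E_conn] := E_subtree i.
have [t t_dec t_width] : exists2 t, path_decomposition (V i) (E i) t &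
    \max_(B <- t) #|B| <= (pathwidth (V i) (E i)).+1.
  by apply: optimal_path_decomposition => x y /subtree_edge/and3P[_ -> ->].
have [e_simple _ _ e_acyclic] := e_tree.
have Ei_sub : subrel (E i) e by move=> x y /subtree_edge/andP[].
have vertsE : union_vertices (i |: S) = union_vertices S :|: V i.
  by rewrite /union_vertices big_setU1 //= setUC.
have edgesE : union_edges (i |: S) =2 [rel x y | union_edges S x y || E i x y].
  by move=> x y; rewrite union_edgesU1.
split.
  rewrite vertsE => x y xU yU; rewrite (eq_connect edgesE).
  exact: connect_setU S_conn E_conn meet x y xU yU.
exists (merged (union_vertices S) (E i) s t).
  rewrite vertsE; apply: sub_path_decomposition (merged_decomposition e_simple e_acyclic
    (@union_edges_sub S) Ei_sub E_sym S_conn s_dec t_dec) => x y.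
  by rewrite edgesE.
rewrite big_setU1 //= addnC; apply: leq_trans (merged_width _ _ _ _) _.
exact: leq_add.
Qed.

Lemma exists_attachable (S : {set 'I_k}) : #|S| < k -> exists2 i, i \notin S &
  (union_vertices S != set0 -> union_vertices S :&: V i != set0).
Proof.
move=> S_small; have /card_gt0P[i0] : 0 < #|~: S|.
  by move: (cardsC S); rewrite card_ord; lia.
rewrite inE => i0S.
have [U0|/set0Pn[x xU]] := eqVneq (union_vertices S) set0; first by exists i0; rewrite ?U0.
case: (pickP (fun y => y \notin union_vertices S)) => [y yU|U_full].
  have [_ _ e_conn _] := e_tree.
  have [u [w [euw uU wU]]] := connect_exit_edge (e_conn x y) xU yU.
  have [i /subtree_edge/and3P[_ uV wV]] := e_covered euw.
  exists i; last by move=> _; apply/set0Pn; exists u; rewrite inE uU uV.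
  by apply: contra wU => iS; apply/bigcupP; exists i.
exists i0 => // _; have [_ /set0Pn[v vV] _] := E_subtree i0.
by apply/set0Pn; exists v; rewrite inE vV andbT; move/negbFE: (U_full v).
Qed.

Lemma union_decomposable_card j :
  j <= k -> exists2 S : {set 'I_k}, #|S| = j & union_decomposable S.
Proof.
elim: j => [|j IHj] jk; first by exists set0; [exact: cards0 | exact: union_decomposable0].
have [S S_card S_dec] := IHj (ltnW jk).
have [|i iS meet] := @exists_attachable S; first by rewrite S_card.
exists (i |: S); first by rewrite cardsU1 iS S_card.
exact: union_decomposableU1.
Qed.

Lemma union_decomposableT : union_decomposable [set: 'I_k].
Proof.
have [S S_card S_dec] := union_decomposable_card (leqnn k).
suff -> : [set: 'I_k] = S by [].
by apply/eqP; rewrite eq_sym eqEcard subsetT cardsT card_ord S_card leqnn.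
Qed.

End SubtreeUnion.

Theorem corollary8 (T : finType) (e : rel T) (k : nat)
    (V : 'I_k -> {set T}) (E : 'I_k -> rel T) :
  is_tree e ->
  (forall i, subtree e (V i) (E i)) ->
  \bigcup_(i < k) V i = [set: T] ->
  (forall x y, e x y -> exists i, E i x y) ->
  (pathwidth [set: T] e).+1 <= \sum_(i < k) (pathwidth (V i) (E i)).+1.
Proof.
move=> e_tree E_subtree V_cover e_covered.
have [_ [s s_dec s_width]] := union_decomposableT e_tree E_subtree e_covered.
have verts_full : union_vertices V [set: 'I_k] = [set: T].
  by rewrite -V_cover; apply: eq_bigl => i; rewrite inE.
have e_dec : path_decomposition [set: T] e s.
  rewrite -verts_full; apply: sub_path_decomposition s_dec => x y /e_covered[i Ei].
  by apply/existsP; exists i; rewrite inE.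
have [_ /card_gt0P[x _] _ _] := e_tree.
apply: leq_trans (pathwidth_lt_max (in_setT x) e_dec) (leq_trans s_width _).
by apply/eq_leq/eq_bigl => i; rewrite inE.
Qed.
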